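(* Let $G$ be a complete geometric graph. Then every blocker for $\mathcal{T}_{\leq 3}(G)$ is a spanning tree of $G$.
   Context: A geometric graph is a graph whose vertices are points in the plane in general position (no three collinear) and whose edges are straight segments between pairs of vertices; $G$ is complete if all pairs of vertices are joined. $\mathcal{T}_{\leq k}(G)$ denotes the family of all simple (non-crossing) spanning trees of $G$ of (graph) diameter at most $k$. A subgraph $B$ blocks a family $\mathcal{F}$ of subgraphs if it shares at least one edge with every member of $\mathcal{F}$; a blocker of $\mathcal{F}$ is a subgraph that blocks $\mathcal{F}$ and has the smallest possible number of edges among all subgraphs blocking $\mathcal{F}$. *)

From mathcomp Require Import all_boot all_order all_algebra.
Set Implicit Arguments. Unset Strict Implicit. Unset Printing Implicit Defensive.
Import Order.TTheory GRing.Theory Num.Theory.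
Local Open Scope ring_scope.

Definition orient (R : numDomainType) (a b c : R * R) : R :=
  (b.1 - a.1) * (c.2 - a.2) - (b.2 - a.2) * (c.1 - a.1).

Definition general_position (R : numDomainType) (n : nat) (p : 'I_n -> R * R) :=
  forall i j k : 'I_n, i != j -> j != k -> i != k -> orient (p i) (p j) (p k) != 0.

Definition complete_edges (n : nat) : {set {set 'I_n}} := [set e : {set 'I_n} | #|e| == 2%N].

Definition on_segment (R : numDomainType) (x a b : R * R) :=
  exists t : R, 0 <= t <= 1 /\
    x = ((1 - t) * a.1 + t * b.1, (1 - t) * a.2 + t * b.2).

Definition segments_meet (R : numDomainType) (a b c d : R * R) :=
  exists x, on_segment x a b /\ on_segment x c d.

(* a geometric (sub)graph with edge set E is simple (non-crossing): no two
   vertex-disjoint edges have intersecting segments (in general position,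
   edges sharing an endpoint meet only at that endpoint) *)
Definition noncrossing (R : numDomainType) (n : nat) (p : 'I_n -> R * R)
    (E : {set {set 'I_n}}) :=
  forall a b c d : 'I_n, [set a; b] \in E -> [set c; d] \in E ->
    [&& a != b, a != c, a != d, b != c, b != d & c != d] ->
    ~ segments_meet (p a) (p b) (p c) (p d).

Definition adj (n : nat) (E : {set {set 'I_n}}) : rel 'I_n :=
  fun x y => [set x; y] \in E.

Definition gconnected (n : nat) (E : {set {set 'I_n}}) :=
  forall x y : 'I_n, connect (adj E) x y.

Definition acyclic (n : nat) (E : {set {set 'I_n}}) :=
  forall s : seq 'I_n, uniq s -> (2 < size s)%N -> ~~ cycle (adj E) s.

Definition spanning_tree (n : nat) (E : {set {set 'I_n}}) :=
  [/\ E \subset complete_edges n, gconnected E & acyclic E].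

Definition diam_le (n : nat) (E : {set {set 'I_n}}) (k : nat) :=
  forall x y : 'I_n, exists s : seq 'I_n,
    [/\ (size s <= k)%N, path (adj E) x s & last x s = y].

Definition T_le (R : numDomainType) (n : nat) (p : 'I_n -> R * R) (k : nat)
    (T : {set {set 'I_n}}) :=
  [/\ spanning_tree T, noncrossing p T & diam_le T k].

Definition blocks (n : nat) (F : {set {set 'I_n}} -> Prop) (B : {set {set 'I_n}}) :=
  forall T, F T -> exists e, e \in B /\ e \in T.

Definition is_blocker (n : nat) (F : {set {set 'I_n}} -> Prop) (B : {set {set 'I_n}}) :=
  [/\ B \subset complete_edges n, blocks F B &
      forall B' : {set {set 'I_n}}, B' \subset complete_edges n -> blocks F B' -> (#|B| <= #|B'|)%N].

From mathcomp Require Import all_boot all_order all_algebra.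
From mathcomp Require Import ring lra zify.
Set Implicit Arguments. Unset Strict Implicit. Unset Printing Implicit Defensive.
Import Order.TTheory GRing.Theory Num.Theory.

(* The star at a vertex is a simple spanning tree of diameter 2, and every connected
   spanning graph meets the star at w; hence every vertex is covered by the blocker B and,
   by minimality, |B| < n.  A connected graph with fewer than n edges is a tree, so it
   remains to show that B is connected.  Otherwise, having fewer than n edges and no
   isolated vertex, B has a leaf w with unique neighbour w'; let C be the component of w.
   Turn a ray around w, starting at w', towards a side of the line ww' containing a
   vertex outside C, and let v be the first such vertex it meets.  The double star with
   centres w and v, where v is joined to w' and to the vertices strictly inside the angle
   w'wv (all of them in C) and w to all other vertices, is simple and has diameter 3, yet
   shares no edge with B: the edges {w,v} and {v,y} would join v to C, and an edge {w,x}
   of B forces x = w'. *)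

Lemma set2_eq_cases (T : finType) (a b c d : T) : [set a; b] = [set c; d] ->
  (a = c /\ b = d) \/ (a = d /\ b = c).
Proof.
move=> h.
have : a \in [set c; d] by rewrite -h set21.
have : b \in [set c; d] by rewrite -h set22.
have : d \in [set a; b] by rewrite h set22.
have : c \in [set a; b] by rewrite h set21.
rewrite !in_set2.
by do 4 (case/orP => /eqP ?); subst; auto.
Qed.

Lemma cycle_neighbours (T : eqType) (e : rel T) (s : seq T) z :
  uniq s -> 2 < size s -> cycle e s -> z \in s ->
  exists a b, [/\ a \in s, b \in s, e z a, e b z & uniq [:: z; a; b]].
Proof.
move=> us ss cs zs; case: (rot_to zs) => k s' def_s.
have mem_s x : x \in z :: s' -> x \in s by rewrite -def_s mem_rot.
have uz : uniq (z :: s') by rewrite -def_s rot_uniq.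
have sz : 2 < size (z :: s') by rewrite -def_s size_rot.
have cz : cycle e (z :: s') by rewrite -def_s rot_cycle.
case: s' mem_s uz sz cz {def_s} => [|a q] //; case/lastP: q => [|q b] //= mem_s.
move=> uz _; rewrite rcons_path last_rcons => /and3P [za _ bz].
move: uz; rewrite /= !inE !mem_rcons !inE !negb_or.
case/and3P=> [/andP [nza /andP [nzb _]] /andP [nab _] _].
exists a, b; split => //.
- by apply: mem_s; rewrite !inE eqxx orbT.
- by apply: mem_s; rewrite !inE mem_rcons mem_head !orbT.
- by rewrite /= !inE negb_or nza nzb nab.
Qed.

Section Graphs.
Variable n : nat.
Implicit Types (E : {set {set 'I_n}}) (x y : 'I_n).

Lemma in_complete_edges x y : ([set x; y] \in complete_edges n) = (x != y).
Proof. by rewrite inE cards2; case: (x != y). Qed.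

Lemma adj_sym E : symmetric (adj E).
Proof. by move=> x y; rewrite /adj setUC. Qed.

Lemma connect_adj_sym E : connect_sym (adj E).
Proof. exact: sym_connect_sym (@adj_sym E). Qed.

Lemma gconnected_from E c : (forall x, connect (adj E) c x) -> gconnected E.
Proof. by move=> h x y; apply: connect_trans (h y); rewrite connect_adj_sym. Qed.

Lemma walk3 E a b c d :
  a = b \/ adj E a b -> b = c \/ adj E b c -> c = d \/ adj E c d ->
  exists s, [/\ size s <= 3, path (adj E) a s & last a s = d].
Proof.
have walk1 u u' : u = u' \/ adj E u u' ->
    exists s, [/\ size s <= 1, path (adj E) u s & last u s = u'].
  by case=> [<-|h]; [exists [::] | exists [:: u']; rewrite /= h].
move=> /walk1 [s1 [z1 p1 l1]] /walk1 [s2 [z2 p2 l2]] /walk1 [s3 [z3 p3 l3]].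
exists (s1 ++ s2 ++ s3); rewrite !cat_path !last_cat l1 p1 p2 l2 p3 l3; split => //.
by rewrite !size_cat; apply: leq_trans (leq_add z1 (leq_add z2 z3)) _.
Qed.

End Graphs.

Section RootedDistance.
Variables (n : nat) (E : {set {set 'I_n}}) (r : 'I_n).
Hypothesis connE : gconnected E.

Definition reaches_root_in k x :=
  [exists t : k.-tuple 'I_n, path (adj E) x t && (last x t == r)].

Lemma reaches_root x : exists k, reaches_root_in k x.
Proof.
have /connectP [t pt lt] := connE x r; exists (size t); apply/existsP.
by exists (in_tuple t); rewrite pt -lt eqxx.
Qed.

Definition root_dist x := ex_minn (reaches_root x).

Lemma root_distP x : reaches_root_in (root_dist x) x.
Proof. by rewrite /root_dist; case: ex_minnP. Qed.

Lemma root_dist_min x k : reaches_root_in k x -> root_dist x <= k.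
Proof. by rewrite /root_dist; case: ex_minnP => m _; apply. Qed.

Lemma exists_parent x : x != r -> exists y, adj E x y && (root_dist y < root_dist x).
Proof.
move=> xr; have /existsP [[s /eqP st] /= /andP [ps ls]] := root_distP x.
case: s st ps ls => [|y s] /= st; first by move=> _ /eqP xr'; rewrite xr' eqxx in xr.
case/andP=> xy ps ls; exists y; rewrite xy -st ltnS root_dist_min //.
by apply/existsP; exists (in_tuple s); rewrite ps ls.
Qed.

Definition parent x := odflt x [pick y | adj E x y && (root_dist y < root_dist x)].

Lemma parentP x : x != r -> adj E x (parent x) /\ root_dist (parent x) < root_dist x.
Proof.
move=> xr; rewrite /parent; case: pickP => [y /andP [] //|] /= none.
by have [y] := exists_parent xr; rewrite none.
Qed.

Definition parent_edges := [set [set x; parent x] | x in [set~ r]].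

Lemma parent_edges_sub : parent_edges \subset E.
Proof.
by apply/subsetP => _ /imsetP [x xr ->]; rewrite in_setC1 in xr; have [] := parentP xr.
Qed.

Lemma parent_edge_eq z c u : u != r -> z != c -> root_dist c <= root_dist z ->
  [set z; c] = [set u; parent u] -> u = z.
Proof.
move=> ur zc czd /set2_eq_cases [[-> //]|[zp cu]].
have [_] := parentP ur; rewrite -zp -cu => /leq_trans/(_ czd).
by rewrite ltnn.
Qed.

Lemma card_parent_edges : #|parent_edges| = n.-1.
Proof.
rewrite card_in_imset ?cardsC1 ?card_ord // => x y; rewrite !in_setC1 => xr yr exy.
have [_ lt_px] := parentP xr.
apply: esym; apply: (parent_edge_eq yr _ (ltnW lt_px) exy).
by rewrite eq_sym; apply: contraTneq lt_px => ->; rewrite ltnn.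
Qed.

Lemma cycle_edge_notin_parent_edges s : uniq s -> 2 < size s -> cycle (adj E) s ->
  exists2 e, e \in E & e \notin parent_edges.
Proof.
move=> us ss cs; case: s us ss cs => [|x0 s0] // us ss cs.
have [z zs zmax] := arg_maxnP root_dist (mem_head x0 s0).
have [a [b [as_ bs za bz]]] := cycle_neighbours us ss cs zs.
rewrite /= !inE !negb_or andbT => /andP [/andP [nza nzb] nab].
have parent_z c : c \in x0 :: s0 -> z != c -> [set z; c] \in parent_edges ->
    [set z; c] = [set z; parent z].
  move=> cs' zc /imsetP [u ur e_zc]; rewrite in_setC1 in ur.
  by rewrite e_zc (parent_edge_eq ur zc (zmax c cs') e_zc).
case ia : ([set z; a] \in parent_edges); last by exists [set z; a]; rewrite ?ia.
case ib : ([set z; b] \in parent_edges); last by exists [set z; b]; rewrite ?ib // setUC.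
have : a \in [set z; b] by rewrite (parent_z b) // -(parent_z a) // set22.
by rewrite in_set2 eq_sym (negbTE nza) (negbTE nab).
Qed.

End RootedDistance.

Lemma card_edges_of_cycle n (E : {set {set 'I_n}}) s : gconnected E ->
  uniq s -> 2 < size s -> cycle (adj E) s -> n <= #|E|.
Proof.
move=> cE us ss cs; case: s us ss cs => [|r s] // us ss cs.
have [e eE eP] := cycle_edge_notin_parent_edges r cE us ss cs.
have : e |: parent_edges r cE \subset E by rewrite subUset sub1set eE parent_edges_sub.
move/subset_leq_card; rewrite cardsU1 eP card_parent_edges; apply: leq_trans.
by rewrite add1n prednK // (leq_ltn_trans _ (ltn_ord r)).
Qed.

Lemma acyclic_of_connected n (E : {set {set 'I_n}}) :
  gconnected E -> #|E| < n -> acyclic E.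
Proof.
move=> cE ltEn s us ss; apply/negP => cs.
by have := card_edges_of_cycle cE us ss cs; rewrite leqNgt ltEn.
Qed.

Lemma exists_minimal (T : finType) (r : rel T) (S : {set T}) x0 : x0 \in S ->
  (forall x y z, x \in S -> y \in S -> z \in S -> r x y -> r y z -> r x z) ->
  (forall x, x \in S -> ~~ r x x) ->
  exists2 v, v \in S & forall u, u \in S -> ~~ r u v.
Proof.
move=> x0S r_trans r_irr; pose preds v := [set u in S | r u v].
have [v vS vmin] := arg_minnP (fun v => #|preds v|) x0S.
exists v => // u uS; apply/negP => ruv.
have : preds u \proper preds v.
  apply/properP; split.
  - apply/subsetP => y; rewrite !inE => /andP [yS ryu]; rewrite yS.
    exact: r_trans ryu ruv.
  - by exists u; rewrite !inE ?uS ?ruv // (negbTE (r_irr u uS)).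
by move/proper_card; rewrite ltnNge vmin.
Qed.

Section Degrees.
Variables (n : nat) (B : {set {set 'I_n}}).
Hypothesis BG : B \subset complete_edges n.

Definition edges_at (u : 'I_n) := [set e in B | u \in e].

Lemma sum_card_edges_at : \sum_(u : 'I_n) #|edges_at u| = #|B| * 2.
Proof.
have card_at u : #|edges_at u| = \sum_(e in B) (u \in e : nat).
  rewrite -sum1_card (eq_bigl (fun e => (e \in B) && (u \in e))) => [|e]; last by rewrite inE.
  by rewrite big_mkcondr /=; apply: eq_bigr => e _; case: (u \in e).
rewrite (eq_bigr _ (fun u _ => card_at u)) exchange_big /= -sum_nat_const.
apply: eq_bigr => e eB; have := subsetP BG e eB; rewrite inE => /eqP <-.
by rewrite -sum1_card [RHS]big_mkcond /=; apply: eq_bigr => u _; case: (u \in e).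
Qed.

Lemma exists_low_degree : #|B| < n -> exists u, #|edges_at u| <= 1.
Proof.
move=> ltBn; case: (boolP [exists u, #|edges_at u| <= 1]) => [/existsP //|].
rewrite negb_exists => /forallP deg2; exfalso.
have : \sum_(u : 'I_n) 2 <= \sum_(u : 'I_n) #|edges_at u|.
  by apply: leq_sum => u _; rewrite ltnNge deg2.
by rewrite sum_card_edges_at sum_nat_const card_ord leq_pmul2r // leqNgt ltBn.
Qed.

Lemma leaf_of_degree1 u : #|edges_at u| = 1 ->
  exists w', [/\ u != w', [set u; w'] \in B & forall x, adj B u x -> x = w'].
Proof.
move=> /eqP/cards1P [e0 e0_at]; have : e0 \in edges_at u by rewrite e0_at set11.
rewrite inE => /andP [e0B ue0].
have := subsetP BG _ e0B; rewrite inE => /cards2P [a [b [ab e0ab]]].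
have [w' [uw' e0w']] : exists w', u != w' /\ e0 = [set u; w'].
  move: ue0; rewrite e0ab in_set2 => /orP [/eqP ->|/eqP ->]; first by exists b.
  by exists a; rewrite eq_sym ab setUC.
exists w'; split; rewrite -?e0w' // => x ux.
have : [set u; x] \in edges_at u by rewrite inE set21 andbT.
rewrite e0_at in_set1 e0w' => /eqP/set2_eq_cases [[_ ->] //|[_ xu]].
by move: (subsetP BG _ ux); rewrite xu in_complete_edges eqxx.
Qed.

End Degrees.

Definition star n (w : 'I_n) : {set {set 'I_n}} := [set [set w; x] | x in [set~ w]].

Lemma card_star_lt n (w : 'I_n) : #|star w| < n.
Proof.
apply: leq_ltn_trans (leq_imset_card _ _) _.
by rewrite cardsC1 card_ord prednK // (leq_ltn_trans _ (ltn_ord w)).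
Qed.

Lemma T_le_star (R : numDomainType) n (p : 'I_n -> R * R) (w : 'I_n) : T_le p 3 (star w).
Proof.
have hub x : x = w \/ adj (star w) w x.
  case: (eqVneq x w) => [->|xw]; [by left | right].
  by rewrite /adj /star; apply/imsetP; exists x; rewrite ?in_setC1.
have conn : gconnected (star w).
  by apply: (@gconnected_from _ _ w) => x; case: (hub x) => [->|/connect1].
split; first split => //.
- by apply/subsetP => _ /imsetP [x xw ->]; rewrite in_complete_edges eq_sym -in_setC1.
- exact: acyclic_of_connected conn (card_star_lt w).
- move=> a b c d /imsetP [x _ hx] /imsetP [y _ hy] /and5P [ab ac ad bc /andP [bd cd]].
  by case: (set2_eq_cases hx) => [[? ?]|[? ?]]; case: (set2_eq_cases hy) => [[? ?]|[? ?]];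
    subst; rewrite ?eqxx in ab ac ad bc bd cd.
- move=> x y; apply: (@walk3 _ _ _ w w).
  + by case: (hub x) => [->|h]; [left | right; rewrite adj_sym].
  + by left.
  + by case: (hub y) => [->|h]; [left | right].
Qed.

Lemma star_blocks (R : numDomainType) n (p : 'I_n -> R * R) (w x : 'I_n) :
  x != w -> blocks (T_le p 3) (star w).
Proof.
move=> xw T [[TG cT _] _ _]; have /connectP [[|y s] /= ps lx] := cT w x.
  by rewrite lx eqxx in xw.
case/andP: ps => wy _; exists [set w; y]; split => //.
by apply/imsetP; exists y; rewrite // in_setC1 eq_sym -in_complete_edges (subsetP TG).
Qed.

Lemma T_le_set0 (R : numDomainType) n (p : 'I_n -> R * R) : n <= 1 -> T_le p 3 set0.
Proof.
move=> n_le1; have all_eq (x y : 'I_n) : x = y.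
  by apply: ord_inj; have := ltn_ord x; have := ltn_ord y; lia.
split; first split.
- exact: sub0set.
- by move=> x y; rewrite (all_eq x y) connect0.
- move=> s us ss; exfalso.
  have : size s <= n by rewrite -(card_uniqP us) -[n in _ <= n]card_ord max_card.
  lia.
- by move=> a b c d; rewrite in_set0.
- by move=> x y; exists [::]; rewrite (all_eq x y).
Qed.

Definition double_star n (w v : 'I_n) (Y : {set 'I_n}) : {set {set 'I_n}} :=
  [set [set w; v]] :|: [set [set w; x] | x in ~: (w |: (v |: Y))] :|: [set [set v; y] | y in Y].

Lemma double_star_cases n (w v : 'I_n) (Y : {set 'I_n}) e : e \in double_star w v Y ->
  [\/ e = [set w; v], exists2 x, x \in ~: (w |: (v |: Y)) & e = [set w; x]
    | exists2 y, y \in Y & e = [set v; y]].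
Proof.
rewrite !in_setU in_set1 => /orP [/orP [/eqP ->|/imsetP [x xX ->]]|/imsetP [y yY ->]].
- by constructor 1.
- by constructor 2; exists x.
- by constructor 3; exists y.
Qed.

Section SegmentsMeet.
Variable R : numDomainType.
Implicit Types a b c d x : R * R.
Local Open Scope ring_scope.

Lemma on_segment_sym x a b : on_segment x a b -> on_segment x b a.
Proof.
case=> t [/andP [t0 t1] ->]; exists (1 - t); split.
  by apply/andP; split; rewrite ?subr_ge0 // lerBlDr lerDl.
by congr pair; ring.
Qed.

Lemma segments_meet_revl a b c d : segments_meet a b c d -> segments_meet b a c d.
Proof. by case=> z [h1 h2]; exists z; split => //; apply: on_segment_sym. Qed.

Lemma segments_meet_revr a b c d : segments_meet a b c d -> segments_meet a b d c.
Proof. by case=> z [h1 h2]; exists z; split => //; apply: on_segment_sym. Qed.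

Lemma segments_meetC a b c d : segments_meet a b c d -> segments_meet c d a b.
Proof. by case=> z [h1 h2]; exists z; split. Qed.

End SegmentsMeet.

Section DoubleStar.
Variables (n : nat) (w v : 'I_n) (Y : {set 'I_n}).
Hypotheses (wv : w != v) (wY : w \notin Y) (vY : v \notin Y).
Let D := double_star w v Y.

Definition double_star_centre x := if x \in Y then v else w.

Lemma double_star_centreP x : double_star_centre x = x \/ adj D (double_star_centre x) x.
Proof.
rewrite /double_star_centre /adj /D !in_setU; case: ifP => [xY|xNY].
  by right; rewrite (imset_f (fun u => [set v; u])) ?orbT.
case: (eqVneq x w) => [->|xw]; first by left.
case: (eqVneq x v) => [->|xv]; first by right; rewrite set11.
right; rewrite (imset_f (fun u => [set w; u])) ?orbT //.
by rewrite !inE negb_or xw negb_or xv xNY.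
Qed.

Lemma double_star_adj_centres : adj D w v.
Proof. by rewrite /adj /D !in_setU set11. Qed.

Lemma double_star_connected : gconnected D.
Proof.
apply: (@gconnected_from _ _ w) => x; case: (double_star_centreP x); rewrite /double_star_centre.
- by case: ifP => _ <-; [exact: connect1 double_star_adj_centres | exact: connect0].
- case: ifP => _ /connect1 // vx; exact: connect_trans (connect1 double_star_adj_centres) vx.
Qed.

Lemma double_star_diam : diam_le D 3.
Proof.
move=> x y; apply: (@walk3 _ _ _ (double_star_centre x) (double_star_centre y)).
- by case: (double_star_centreP x) => [->|h]; [left | right; rewrite adj_sym].
- have Dwv := double_star_adj_centres.
  by rewrite /double_star_centre; case: ifP; case: ifP; auto; right; rewrite adj_sym.
- by case: (double_star_centreP y) => [->|h]; [left | right].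
Qed.

Lemma double_star_sub : D \subset complete_edges n.
Proof.
apply/subsetP => e /double_star_cases [->|[x xX ->]|[y yY ->]]; rewrite in_complete_edges //.
- by move: xX; rewrite !inE !negb_or eq_sym => /andP [].
- by apply/eqP => vy; move: vY; rewrite vy yY.
Qed.

Lemma card_double_star_lt : #|D| < n.
Proof.
set X := ~: (w |: (v |: Y)).
have cardX : #|X| + #|Y| + 2 = n.
  have := cardsC (w |: (v |: Y)); rewrite card_ord !cardsU1 !in_setU1.
  rewrite (negbTE wv) (negbTE wY) (negbTE vY) /=.
  rewrite -/X => h; apply: etrans h; rewrite [RHS]addnC -addnA; congr (_ + _).
  exact: addnC.
have cardD : #|D| <= 1 + #|X| + #|Y|.
  apply: leq_trans (leq_card_setU _ _).1 _; apply: leq_add; last exact: leq_imset_card.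
  apply: leq_trans (leq_card_setU _ _).1 _; rewrite cards1 leq_add2l.
  exact: leq_imset_card.
lia.
Qed.

Lemma T_le_double_star (R : numDomainType) (p : 'I_n -> R * R) :
  (forall x y, x \in ~: (w |: (v |: Y)) -> y \in Y ->
     ~ segments_meet (p w) (p x) (p v) (p y)) ->
  T_le p 3 D.
Proof.
move=> H; split; first split.
- exact: double_star_sub.
- exact: double_star_connected.
- exact: acyclic_of_connected double_star_connected card_double_star_lt.
- (* the only vertex-disjoint pairs of edges of D are {w, x} and {v, y} *)
  move=> a b c d /double_star_cases h1 /double_star_cases h2 /and5P [ab ac ad bc /andP [bd cd]].
  case: h1 => [e1|[x xX e1]|[y yY e1]]; case: h2 => [e2|[x' xX' e2]|[y' yY' e2]];
  case: (set2_eq_cases e1) => [[? ?]|[? ?]]; case: (set2_eq_cases e2) => [[? ?]|[? ?]]; subst;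
  rewrite ?eqxx in ab ac ad bc bd cd => //; move=> M;
  first [ apply: (H x y' xX yY') | apply: (H x' y xX' yY) ];
  first [ exact M | exact (segments_meet_revl M) | exact (segments_meet_revr M)
        | exact (segments_meet_revl (segments_meet_revr M))
        | have {}M := segments_meetC M;
          first [ exact M | exact (segments_meet_revl M) | exact (segments_meet_revr M)
                | exact (segments_meet_revl (segments_meet_revr M)) ] ].
- exact: double_star_diam.
Qed.

End DoubleStar.

Section Orientation.
Variable R : realFieldType.
Implicit Types (e : R) (a b : R * R).
Local Open Scope ring_scope.

Lemma orient_id12 a b : orient a a b = 0.
Proof. by rewrite /orient; ring. Qed.

Lemma orient_id13 a b : orient a b a = 0.
Proof. by rewrite /orient; ring. Qed.

Lemma orient_id23 a b : orient a b b = 0.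
Proof. by rewrite /orient; ring. Qed.

Lemma orient_halfplane_trans e (W W' A B C : R * R) :
  0 < e * orient W W' A -> 0 < e * orient W W' B -> 0 < e * orient W W' C ->
  0 < e * orient W A B -> 0 < e * orient W B C -> 0 < e * orient W A C.
Proof.
move=> hA hB hC hAB hBC.
(* a Grassmann-Pluecker relation *)
have plucker : (e * orient W W' B) * (e * orient W A C) =
    (e * orient W W' A) * (e * orient W B C) + (e * orient W W' C) * (e * orient W A B).
  by rewrite /orient; ring.
have : 0 < (e * orient W W' B) * (e * orient W A C).
  by rewrite plucker addr_gt0 // mulr_gt0.
by rewrite pmulr_rgt0.
Qed.

(* Y lies in the closed angle between the rays WW' and WV, X strictly outside it. *)
Lemma angle_segments_disjoint e (W W' V X Y : R * R) :
  0 < e * orient W W' V -> 0 <= e * orient W W' Y -> 0 < e * orient W Y V ->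
  e * orient W W' X < 0 \/ e * orient W X V < 0 ->
  ~ segments_meet W X V Y.
Proof.
move=> hV hY hYV hX [z [[a [/andP [a0 a1] za]] [b [/andP [b0 b1] zb]]]].
have oz_a : e * orient W W' z = a * (e * orient W W' X) by rewrite za /orient /=; ring.
have oz_b : e * orient W W' z = (1 - b) * (e * orient W W' V) + b * (e * orient W W' Y).
  by rewrite zb /orient /=; ring.
have oz_a' : e * orient W z V = a * (e * orient W X V) by rewrite za /orient /=; ring.
have oz_b' : e * orient W z V = b * (e * orient W Y V) by rewrite zb /orient /=; ring.
have zW : a = 0 -> z = W.
  by move=> a_0; rewrite za a_0 subr0 !mul1r !mul0r !addr0 -surjective_pairing.
case: hX => hX.
- move: oz_b; rewrite oz_a => oz.
  have [a_0 b_1] : a = 0 /\ b = 1 by split; nra.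
  have zY : z = Y by rewrite zb b_1 subrr !mul0r !add0r !mul1r -surjective_pairing.
  by move: hYV; rewrite -zY zW // orient_id12 mulr0 ltxx.
- move: oz_b'; rewrite oz_a' => oz.
  have [a_0 b_0] : a = 0 /\ b = 0 by split; nra.
  have zV : z = V by rewrite zb b_0 subr0 !mul0r !addr0 !mul1r -surjective_pairing.
  by move: hV; rewrite -zV zW // orient_id13 mulr0 ltxx.
Qed.

End Orientation.

Section Wedge.
Variables (R : realFieldType) (n : nat) (p : 'I_n -> R * R).
Hypothesis hgp : general_position p.
Local Open Scope ring_scope.

(* w' together with the vertices strictly inside the angle w' w v, which lies on the
   eps-side of the line w w'. *)
Definition wedge (eps : R) (w w' v : 'I_n) : {set 'I_n} :=
  w' |: [set y | (0 < eps * orient (p w) (p w') (p y)) && (0 < eps * orient (p w) (p y) (p v))].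

Lemma T_le_wedge_double_star eps w w' v : w != w' ->
  0 < eps * orient (p w) (p w') (p v) -> T_le p 3 (double_star w v (wedge eps w w' v)).
Proof.
move=> ww' ov.
have w'v : w' != v by apply: contraTneq ov => <-; rewrite orient_id23 mulr0 ltxx.
have wv : w != v by apply: contraTneq ov => <-; rewrite orient_id13 mulr0 ltxx.
have wY : w \notin wedge eps w w' v.
  by rewrite in_setU1 (negbTE ww') inE orient_id13 mulr0 ltxx.
have vY : v \notin wedge eps w w' v.
  by rewrite in_setU1 eq_sym (negbTE w'v) inE orient_id23 mulr0 ltxx andbF.
apply: T_le_double_star => // x y; rewrite in_setC !in_setU1 !negb_or => /and3P [xw xv].
case/andP=> xw'; rewrite inE => xY yY.
apply: (@angle_segments_disjoint _ eps _ (p w')) => //.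
- move: yY; rewrite inE => /orP [/eqP ->|/andP [oy _]]; last exact: ltW.
  by rewrite orient_id23 mulr0.
- by move: yY; rewrite inE => /orP [/eqP ->|/andP []].
- have eps0 : eps != 0 by apply: contraTneq ov => ->; rewrite mul0r ltxx.
  have ox : eps * orient (p w) (p w') (p x) != 0.
    by rewrite mulf_neq0 //; apply: hgp; rewrite // eq_sym.
  have oxv : eps * orient (p w) (p x) (p v) != 0.
    by rewrite mulf_neq0 //; apply: hgp; rewrite // eq_sym.
  move: xY; rewrite negb_and => /orP [] ?; [left | right];
    by rewrite lt_neqAle ?ox ?oxv // leNgt.
Qed.

Lemma exists_wedge_in (C : {set 'I_n}) w w' u :
  w \in C -> w' \in C -> u \notin C -> w != w' ->
  exists eps v, [/\ v \notin C, 0 < eps * orient (p w) (p w') (p v) & wedge eps w w' v \subset C].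
Proof.
move=> wC w'C uC ww'.
have uw : u != w by apply: contraNneq uC => ->.
have uw' : u != w' by apply: contraNneq uC => ->.
have [eps epsu] : exists eps : R, 0 < eps * orient (p w) (p w') (p u).
  have o0 : orient (p w) (p w') (p u) != 0 by apply: hgp; rewrite // eq_sym.
  case: (ltP 0 (orient (p w) (p w') (p u))) => [o_gt0|o_le0].
    by exists 1; rewrite mul1r.
  by exists (-1); rewrite mulN1r oppr_gt0 lt_neqAle o0 o_le0.
pose S := [set v | (v \notin C) && (0 < eps * orient (p w) (p w') (p v))].
pose before y v := 0 < eps * orient (p w) (p y) (p v).
have [v vS vmin] : exists2 v, v \in S & forall y, y \in S -> ~~ before y v.
  apply: (@exists_minimal _ before S u); first by rewrite inE uC.
    move=> a b c; rewrite !inE => /andP [_ oa] /andP [_ ob] /andP [_ oc].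
    exact: orient_halfplane_trans oa ob oc.
  by move=> a _; rewrite /before orient_id23 mulr0 ltxx.
exists eps, v; move: vS; rewrite inE => /andP [vC ov]; split => //.
apply/subsetP => y; rewrite in_setU1 => /orP [/eqP -> // |]; rewrite inE => /andP [oy yv].
by apply: contraT => yC; have := vmin y; rewrite inE yC oy /before yv; apply.
Qed.

End Wedge.

Section Blocker.
Variables (R : realFieldType) (n : nat) (p : 'I_n -> R * R) (B : {set {set 'I_n}}).
Hypothesis hgp : general_position p.
Hypothesis blockerB : is_blocker (T_le p 3) B.

Lemma blocker_n_gt1 : 1 < n.
Proof.
have [_ blocksB _] := blockerB; rewrite ltnNge; apply/negP => n_le1.
by have [e [_]] := blocksB _ (T_le_set0 p n_le1); rewrite in_set0.
Qed.

Lemma blocker_covers u : exists2 e, e \in B & u \in e.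
Proof.
have [_ blocksB _] := blockerB; have [e [eB /imsetP [x _ e_ux]]] := blocksB _ (T_le_star p u).
by exists e; rewrite // e_ux set21.
Qed.

Lemma blocker_card_lt : #|B| < n.
Proof.
have [_ _ minB] := blockerB; pose w0 : 'I_n := Ordinal (ltnW blocker_n_gt1).
have [[starG _ _] _ _] := T_le_star p w0.
apply: leq_ltn_trans (minB _ starG _) (card_star_lt w0).
by apply: (@star_blocks _ _ _ w0 (Ordinal blocker_n_gt1)); rewrite -val_eqE.
Qed.

Lemma blocker_has_leaf :
  exists w w', [/\ w != w', [set w; w'] \in B & forall x, adj B w x -> x = w'].
Proof.
have [BG _ _] := blockerB; have [u u_le1] := exists_low_degree BG blocker_card_lt.
have [e eB ue] := blocker_covers u.
exists u; apply: leaf_of_degree1 => //; apply/eqP; rewrite eqn_leq u_le1 card_gt0.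
by apply/set0Pn; exists e; rewrite inE eB.
Qed.

Lemma blocker_connected : gconnected B.
Proof.
have [_ blocksB _] := blockerB; have [w [w' [ww' ww'B leaf]]] := blocker_has_leaf.
move=> a b; apply/negPn/negP => nab.
pose C := [set u | connect (adj B) w u].
have [u uC] : exists u, u \notin C.
  case: (boolP (a \in C)) => aC; last by exists a.
  exists b; apply: contra nab; rewrite !inE in aC * => wb.
  by apply: connect_trans wb; rewrite connect_adj_sym.
have wC : w \in C by rewrite inE connect0.
have w'C : w' \in C by rewrite inE (connect1 (ww'B : adj B w w')).
have [eps [v [vC ov YC]]] := exists_wedge_in hgp wC w'C uC ww'.
have [e [eB]] := blocksB _ (T_le_wedge_double_star hgp ww' ov).
case/double_star_cases => [e_wv|[x xX e_wx]|[y yY e_vy]]; subst e.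
- by rewrite inE (connect1 (eB : adj B w v)) in vC.
- by move: xX; rewrite (leaf x eB) !inE eqxx !orbT.
- move: vC; rewrite !inE; have := subsetP YC y yY; rewrite inE => wy.
  by rewrite (connect_trans wy) // connect1 // adj_sym.
Qed.

End Blocker.

Theorem proposition2 (R : realFieldType) (n : nat) (p : 'I_n -> R * R)
  (hgp : general_position p) (B : {set {set 'I_n}}) :
  is_blocker (T_le p 3) B -> spanning_tree B.
Proof.
move=> blockerB; have [BG _ _] := blockerB.
have connB := blocker_connected hgp blockerB.
by split; last exact: acyclic_of_connected connB (blocker_card_lt blockerB).
Qed.
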